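(* Let $\mathcal A$ be a cluster algebra. The map $\phi:H\mapsto\mathcal M^H_{sub}$, restricted to the set of subgroups $H\le\mathrm{Aut}\,\mathcal A$ with $\mathcal M^H_{sub}\neq\emptyset$, is injective.
   Context: $\mathrm{Aut}\,\mathcal A$: group of cluster automorphisms. Cluster subalgebras $\mathcal A(\Sigma')$ arise from mixing-type sub-seeds of seeds of $\mathcal A$ (delete some variables, freeze some exchange variables, with zero matrix entries between deleted variables and remaining exchange variables). $\mathrm{Gal}_{\Sigma'}\mathcal A=\{f\in\mathrm{Aut}\,\mathcal A: f|_{\mathcal A(\Sigma')}=\mathrm{id}\}$; $\mathcal A^H=\{z\in\mathcal A: f(z)=z\ \forall f\in H\}$; $\mathcal M^H_{sub}$ is the set of cluster subalgebras $\mathcal A(\Sigma')$ maximal (under inclusion) among cluster subalgebras contained in $\mathcal A^H$ and satisfying $\mathrm{Gal}_{\Sigma'}\mathcal A=H$. *)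

From HB Require Import structures.
From mathcomp Require Import all_boot all_order all_algebra.
From mathcomp Require Import fraction.
From mathcomp Require Import mpoly.

Set Implicit Arguments.
Unset Strict Implicit.
Unset Printing Implicit Defensive.

Import Order.TTheory GRing.Theory Num.Theory.
Local Open Scope ring_scope.

Section ClusterAlgebra.
Variable N : nat.

(* Ambient field: Q(x_0, ..., x_{N-1}), the field of rational functions in
   the N initial extended cluster variables. *)
Definition ambient : fieldType := {fraction {mpoly rat[N]}}.
Local Notation F := ambient.

(* A (labelled) seed: extended cluster x (indexed by the labels 'I_N),
   the set V of labels of variables present in the seed, the set E of
   exchangeable labels (E \subset V; V :\: E are the frozen labels), and the
   exchange matrix B (only the entries B i j with i \in V, j \in E matter). *)
Record seed := Seed {
  sx : 'I_N -> F;
  sV : {set 'I_N};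
  sE : {set 'I_N};
  sB : 'M[int]_N }.

Definition pos (b : int) : nat := absz (Num.max 0 b).

Definition mutate (k : 'I_N) (S : seed) : seed :=
  if k \in sE S then
    let x := sx S in let B := sB S in
    Seed
      (fun i => if i == k then
         ((\prod_(i0 in sV S) x i0 ^+ pos (B i0 k)) +
          (\prod_(i0 in sV S) x i0 ^+ pos (- B i0 k))) / x k
       else x i)
      (sV S) (sE S)
      (\matrix_(i, j) (if (i == k) || (j == k) then - B i j
         else B i j + ((Num.max 0 (B i k)) * (Num.max 0 (B k j))
                       - (Num.max 0 (- B i k)) * (Num.max 0 (- B k j)))))
  else S.

Definition mutseq (ks : seq 'I_N) (S : seed) : seed :=
  foldl (fun s k => mutate k s) S ks.

Definition generator (S : seed) (z : F) : Prop :=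
  (exists ks : seq 'I_N, all (mem (sE S)) ks /\
     exists2 k, k \in sE S & z = sx (mutseq ks S) k)
  \/ (exists2 k, k \in sV S :\: sE S & z = sx S k).

Definition subring (P : F -> Prop) : Prop :=
  P 1 /\ (forall a b, P a -> P b -> P (a - b)) /\
  (forall a b, P a -> P b -> P (a * b)).

Definition clalg (S : seed) (z : F) : Prop :=
  forall P : F -> Prop, subring P -> (forall w, generator S w -> P w) -> P z.

Definition skew_symmetrizable (E0 : {set 'I_N}) (B0 : 'M[int]_N) : Prop :=
  exists d : 'I_N -> int, (forall i, i \in E0 -> 0 < d i) /\
    (forall i j, i \in E0 -> j \in E0 -> d i * B0 i j = - (d j * B0 j i)).

Variables (E0 : {set 'I_N}) (B0 : 'M[int]_N).

Definition seed0 : seed := Seed (fun i => FracField.tofrac ('X_i : {mpoly rat[N]})) setT E0 B0.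

Definition clA : F -> Prop := clalg seed0.

Definition seed_of_A (S : seed) : Prop :=
  exists ks : seq 'I_N, all (mem E0) ks /\ S = mutseq ks seed0.

(* Cluster automorphisms of A, represented by their canonical extension by
   the identity outside A (this gives a bijection with Aut A). *)
Definition cluster_aut (f : F -> F) : Prop :=
  (forall z, ~ clA z -> f z = z) /\
  (forall z, clA z -> clA (f z)) /\
  (forall w, clA w -> exists z, clA z /\ f z = w) /\
  (forall z1 z2, clA z1 -> clA z2 -> f z1 = f z2 -> z1 = z2) /\
  f 1 = 1 /\
  (forall a b, clA a -> clA b -> f (a + b) = f a + f b) /\
  (forall a b, clA a -> clA b -> f (a * b) = f a * f b) /\
  (exists S S', seed_of_A S /\ seed_of_A S' /\
     exists s : 'I_N -> 'I_N,
       {in E0 &, injective s} /\ (forall k, k \in E0 -> s k \in E0) /\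
       (forall k, k \in E0 -> f (sx S k) = sx S' (s k)) /\
       (forall k, k \in E0 ->
          f (sx (mutate k S) k) = sx (mutate (s k) S') (s k))).

Definition subgroup (H : (F -> F) -> Prop) : Prop :=
  (forall f, H f -> cluster_aut f) /\ H id /\
  (forall f g, H f -> H g -> H (f \o g)) /\
  (forall f, H f -> exists g, H g /\ g \o f = id).

(* Mixing-type sub-seed: freeze I0 \subset E, delete I1, I0 and I1 disjoint,
   b_ij = 0 for i deleted and j a remaining exchangeable label. *)
Definition mixing_ok (S : seed) (I0 I1 : {set 'I_N}) : Prop :=
  I0 \subset sE S /\ [disjoint I0 & I1] /\
  (forall i j, i \in I1 -> j \in sE S :\: (I0 :|: I1) -> sB S i j = 0).

Definition subseed (S : seed) (I0 I1 : {set 'I_N}) : seed :=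
  Seed (sx S) (sV S :\: I1) (sE S :\: (I0 :|: I1)) (sB S).

Definition cluster_subalgebra (T : F -> Prop) : Prop :=
  exists S, seed_of_A S /\
    exists I0 I1, mixing_ok S I0 I1 /\ T = clalg (subseed S I0 I1).

Definition Gal (T : F -> Prop) : (F -> F) -> Prop :=
  fun f => cluster_aut f /\ forall z, T z -> f z = z.

Definition fixed (H : (F -> F) -> Prop) : F -> Prop :=
  fun z => clA z /\ forall f, H f -> f z = z.

Definition subset_pred (T T' : F -> Prop) : Prop := forall z, T z -> T' z.

Definition Msub (H : (F -> F) -> Prop) : (F -> Prop) -> Prop :=
  fun T => cluster_subalgebra T /\ subset_pred T (fixed H) /\ Gal T = H /\
    (forall T', cluster_subalgebra T' -> subset_pred T' (fixed H) ->
       Gal T' = H -> subset_pred T T' -> T' = T).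

End ClusterAlgebra.

From mathcomp Require Import all_boot all_order all_algebra.

(* Membership in M^H_sub includes the condition Gal_T A = H, so H is recovered
   from any single member of M^H_sub; nonemptiness supplies such a member. *)

Lemma Msub_Gal {N : nat} {E0 : {set 'I_N}} {B0 : 'M[int]_N}
    {H : (ambient N -> ambient N) -> Prop} {T : ambient N -> Prop} :
  Msub E0 B0 H T -> Gal E0 B0 T = H.
Proof. by case=> _ [_ []]. Qed.

Theorem mainTheorem10 (N : nat) (E0 : {set 'I_N}) (B0 : 'M[int]_N)
  (hB : skew_symmetrizable E0 B0)
  (H K : (ambient N -> ambient N) -> Prop) :
  subgroup E0 B0 H -> subgroup E0 B0 K ->
  (exists T, Msub E0 B0 H T) -> (exists T, Msub E0 B0 K T) ->
  Msub E0 B0 H = Msub E0 B0 K -> H = K.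
Proof.
move=> _ _ [T MHT] _ eqM.
have MKT : Msub E0 B0 K T by rewrite -eqM.
by rewrite -(Msub_Gal MHT) (Msub_Gal MKT).
Qed.
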